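(* If a Banach space $Z$ admits a uniform embedding into $L_2$, then $Z$ (with its norm metric) is $\Lambda$-nontrivial.
   Context: A uniform embedding is an invertible map $f$ such that $f$ and $f^{-1}$ are uniformly continuous. A map $f:X\to L_2$ is $\tau$-thresholding if $d(x,y)\ge\tau$ implies $\|f(x)-f(y)\|_2\ge\tau$. Define $\Lambda_\tau(X,\varepsilon)=\inf\big\{\sup_{x,y\in X,\ d(x,y)\ge\varepsilon\tau}\frac{\varepsilon\|f(x)-f(y)\|_2}{d(x,y)}: f:X\to L_2\text{ is }\tau\text{-thresholding}\big\}$ and $\Lambda(X,\varepsilon)=\sup_{\tau>0}\Lambda_\tau(X,\varepsilon)$. $(X,d)$ is $\Lambda$-nontrivial if $\liminf_{\varepsilon\to0}\Lambda(X,\varepsilon)=0$. *)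

From Stdlib Require Import Reals ClassicalEpsilon.
Open Scope R_scope.

Record NormedSpace := {
  ns_car :> Type;
  ns_zero : ns_car;
  ns_add : ns_car -> ns_car -> ns_car;
  ns_opp : ns_car -> ns_car;
  ns_scal : R -> ns_car -> ns_car;
  ns_norm : ns_car -> R;
  ns_addA : forall x y z, ns_add x (ns_add y z) = ns_add (ns_add x y) z;
  ns_addC : forall x y, ns_add x y = ns_add y x;
  ns_add0 : forall x, ns_add x ns_zero = x;
  ns_addN : forall x, ns_add x (ns_opp x) = ns_zero;
  ns_scal1 : forall x, ns_scal 1 x = x;
  ns_scalA : forall a b x, ns_scal a (ns_scal b x) = ns_scal (a * b) x;
  ns_scalDr : forall a x y, ns_scal a (ns_add x y) = ns_add (ns_scal a x) (ns_scal a y);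
  ns_scalDl : forall a b x, ns_scal (a + b) x = ns_add (ns_scal a x) (ns_scal b x);
  ns_norm_eq0 : forall x, ns_norm x = 0 -> x = ns_zero;
  ns_norm_scal : forall a x, ns_norm (ns_scal a x) = Rabs a * ns_norm x;
  ns_norm_triangle : forall x y, ns_norm (ns_add x y) <= ns_norm x + ns_norm y
}.

Definition ns_dist (Z : NormedSpace) (x y : Z) : R :=
  ns_norm Z (ns_add Z x (ns_opp Z y)).

Definition complete (Z : NormedSpace) : Prop :=
  forall u : nat -> Z,
    (forall e, 0 < e -> exists N : nat, forall m n : nat,
        (N <= m)%nat -> (N <= n)%nat -> ns_dist Z (u m) (u n) < e) ->
    exists l : Z, forall e, 0 < e -> exists N : nat, forall n : nat,
        (N <= n)%nat -> ns_dist Z (u n) l < e.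

(** * The Hilbert space L_2, realised as l_2 (isometric to L_2[0,1]). *)
Definition square_summable (a : nat -> R) : Prop :=
  exists s, infinite_sum (fun n => (a n) ^ 2) s.

Definition L2 : Type := { a : nat -> R | square_summable a }.

(** sum_n a_n^2 (the chosen limit; meaningful for square-summable a). *)
Definition sumsq (a : nat -> R) : R :=
  epsilon (inhabits 0) (fun s => infinite_sum (fun n => (a n) ^ 2) s).

Definition L2_dist (u v : L2) : R :=
  sqrt (sumsq (fun n => proj1_sig u n - proj1_sig v n)).

Definition uniformly_embeds_into_L2 (X : Type) (d : X -> X -> R) : Prop :=
  exists f : X -> L2,
    (forall x y, f x = f y -> x = y) /\
    (forall e, 0 < e -> exists del, 0 < del /\
        forall x y, d x y < del -> L2_dist (f x) (f y) < e) /\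
    (forall e, 0 < e -> exists del, 0 < del /\
        forall x y, L2_dist (f x) (f y) < del -> d x y < e).

Definition thresholding (X : Type) (d : X -> X -> R) (tau : R) (f : X -> L2) : Prop :=
  forall x y, d x y >= tau -> L2_dist (f x) (f y) >= tau.

(** Lambda_tau(X, eps) <= c, i.e.
    inf { sup_{d(x,y) >= eps*tau} eps ||f x - f y|| / d(x,y) : f tau-thresholding } <= c. *)
Definition Lambda_tau_le (X : Type) (d : X -> X -> R) (eps tau c : R) : Prop :=
  forall eta, 0 < eta -> exists f : X -> L2, thresholding X d tau f /\
    forall x y, d x y >= eps * tau ->
      eps * L2_dist (f x) (f y) / d x y <= c + eta.

Definition Lambda_le (X : Type) (d : X -> X -> R) (eps c : R) : Prop :=
  forall tau, 0 < tau -> Lambda_tau_le X d eps tau c.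

(** (X,d) is Lambda-nontrivial: liminf_{eps -> 0+} Lambda(X, eps) = 0.
    Since Lambda >= 0 (when X has two points), this amounts to:
    for every delta > 0 and eps0 > 0 there is eps in (0, eps0) with
    Lambda(X, eps) <= delta. *)
Definition Lambda_nontrivial (X : Type) (d : X -> X -> R) : Prop :=
  forall delta eps0, 0 < delta -> 0 < eps0 ->
    exists eps, 0 < eps /\ eps < eps0 /\ Lambda_le X d eps delta.

(** Let F : Z -> L_2 be a uniform embedding.  Two facts about F drive the proof.
    - Coarse Lipschitz bound: if ||x - y|| < d1 forces ||F x - F y|| < e, then
      cutting the segment [x, y] into ceil(||x - y|| / d1) pieces and using the
      triangle inequality in L_2 gives ||F x - F y|| <= e (||x - y|| / d1 + 1).
    - Expansion: if ||F x - F y|| < d2 forces ||x - y|| < 1, then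
      G_tau x := (tau / d2) F (x / tau) is tau-thresholding for every tau > 0.
    For eps <= d1 and ||x - y|| >= eps tau the coarse bound applied to G_tau yields
    eps ||G_tau x - G_tau y|| / ||x - y|| <= 2 e / d2, uniformly in tau; choosing
    e = delta d2 / 2 gives Lambda(Z, eps) <= delta for all small eps. *)
From Stdlib Require Import Reals ZArith Lra Lia Psatz ClassicalEpsilon.
Open Scope R_scope.

Lemma infinite_sum_ext (f g : nat -> R) l :
  (forall n, f n = g n) -> infinite_sum f l -> infinite_sum g l.
Proof.
  intros Efg Hf e He. destruct (Hf e He) as [N HN]. exists N. intros n Hn.
  rewrite <- (sum_eq f g n) by (intros; apply Efg). now apply HN.
Qed.

Lemma infinite_sum_scal (f : nat -> R) c l :
  infinite_sum f l -> infinite_sum (fun n => c * f n) (c * l).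
Proof.
  intros Hf.
  assert (Hc : Un_cv (fun _ : nat => c) c).
  { intros e He. exists 0%nat. intros. unfold R_dist. rewrite Rminus_diag, Rabs_R0. lra. }
  intros e He. destruct (CV_mult _ _ _ _ Hc Hf e He) as [N HN]. exists N. intros n Hn.
  replace (sum_f_R0 (fun k => c * f k) n) with (c * sum_f_R0 f n) by
    (rewrite scal_sum; apply sum_eq; intros; ring).
  now apply HN.
Qed.

Lemma sumsq_spec (a : nat -> R) s : infinite_sum (fun n => a n ^ 2) s -> sumsq a = s.
Proof.
  intros Hs. unfold sumsq.
  eapply uniqueness_sum; [apply epsilon_spec; now exists s | exact Hs].
Qed.

(** Weighted Young inequality (a + b)^2 <= (1 + t) a^2 + (1 + 1/t) b^2, summed:
    it shows that sums of square-summable sequences are square-summable. *)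
Lemma weighted_square_sum_bound (x y z : nat -> R) A B t : 0 < t ->
  (forall n, z n = x n + y n) ->
  infinite_sum (fun n => x n ^ 2) A -> infinite_sum (fun n => y n ^ 2) B ->
  exists S, infinite_sum (fun n => z n ^ 2) S /\ S <= (1 + t) * A + (1 + / t) * B.
Proof.
  intros Ht Ez HA HB.
  set (Bn := fun n => (1 + t) * x n ^ 2 + (1 + / t) * y n ^ 2).
  assert (HBn : Un_cv (fun N => sum_f_R0 Bn N) ((1 + t) * A + (1 + / t) * B)).
  { pose proof (CV_plus _ _ _ _ (infinite_sum_scal _ (1 + t) _ HA)
                              (infinite_sum_scal _ (1 + / t) _ HB)) as HC.
    intros e He. destruct (HC e He) as [N HN]. exists N. intros n Hn.
    unfold Bn. rewrite plus_sum. now apply HN. }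
  assert (Hpt : forall n, 0 <= z n ^ 2 <= Bn n).
  { intros n. unfold Bn. rewrite Ez. split; [apply pow2_ge_0|].
    assert (Hsq : 0 <= (t * x n - y n) ^ 2 * / t)
      by (apply Rmult_le_pos; [apply pow2_ge_0 | left; apply Rinv_0_lt_compat, Ht]).
    assert ((1 + t) * x n ^ 2 + (1 + / t) * y n ^ 2 - (x n + y n) ^ 2
            = (t * x n - y n) ^ 2 * / t) by (field; lra).
    lra. }
  destruct (Rseries_CV_comp _ _ Hpt (exist _ _ HBn)) as [S HS].
  exists S. split; [exact HS|].
  eapply Rle_cv_lim; [| exact HS | exact HBn].
  intros n. apply sum_Rle. intros. apply Hpt.
Qed.

(** Optimizing the weight t turns the weighted bound into a bound on square roots. *)
Lemma sqrt_le_of_weighted_bounds S A B : 0 <= A -> 0 <= B ->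
  (forall t, 0 < t -> S <= (1 + t) * A + (1 + / t) * B) -> sqrt S <= sqrt A + sqrt B.
Proof.
  intros HA HB Hbound.
  set (a := sqrt A); set (b := sqrt B).
  assert (Ha : 0 <= a) by apply sqrt_pos.
  assert (Hb : 0 <= b) by apply sqrt_pos.
  assert (EA : A = a * a) by (symmetry; apply sqrt_sqrt, HA).
  assert (EB : B = b * b) by (symmetry; apply sqrt_sqrt, HB).
  (* The weight t = (b + h) / (a + h) gives S <= (a + b + 2h) (a + b). *)
  assert (Hh : forall h, 0 < h -> S <= (a + b) * (a + b) + 2 * h * (a + b)).
  { intros h Hh.
    assert (Ht : 0 < (b + h) / (a + h)) by (apply Rdiv_lt_0_compat; lra).
    specialize (Hbound _ Ht).
    replace ((1 + (b + h) / (a + h)) * A + (1 + / ((b + h) / (a + h))) * B)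
      with ((a + b + 2 * h) * (a * a / (a + h) + b * b / (b + h))) in Hbound
      by (rewrite EA, EB; field; lra).
    assert (a * a / (a + h) <= a).
    { apply (Rmult_le_reg_r (a + h)); [lra|].
      unfold Rdiv. rewrite Rmult_assoc, Rinv_l by lra. nra. }
    assert (b * b / (b + h) <= b).
    { apply (Rmult_le_reg_r (b + h)); [lra|].
      unfold Rdiv. rewrite Rmult_assoc, Rinv_l by lra. nra. }
    nra. }
  assert (HS : S <= (a + b) * (a + b)).
  { apply Rle_plus_epsilon. intros e He.
    specialize (Hh (e / (2 * (a + b + 1))) ltac:(apply Rdiv_lt_0_compat; lra)).
    assert ((a + b) / (a + b + 1) <= 1).
    { apply (Rmult_le_reg_r (a + b + 1)); [lra|].
      unfold Rdiv. rewrite Rmult_assoc, Rinv_l by lra. lra. }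
    replace (2 * (e / (2 * (a + b + 1))) * (a + b)) with (e * ((a + b) / (a + b + 1)))
      in Hh by (field; lra).
    nra. }
  rewrite <- (sqrt_square (a + b)) by lra.
  apply sqrt_le_1_alt, HS.
Qed.

Lemma L2_diff_sumsq (u w : L2) :
  infinite_sum (fun n => (proj1_sig u n - proj1_sig w n) ^ 2)
               (sumsq (fun n => proj1_sig u n - proj1_sig w n)).
Proof.
  destruct (proj2_sig u) as [A HA]. destruct (proj2_sig w) as [B HB].
  assert (HB' : infinite_sum (fun n => (- proj1_sig w n) ^ 2) B)
    by (revert HB; apply infinite_sum_ext; intros; ring).
  destruct (weighted_square_sum_bound (proj1_sig u) (fun n => - proj1_sig w n)
              (fun n => proj1_sig u n - proj1_sig w n) A B 1 ltac:(lra)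
              ltac:(intros; cbv beta; ring) HA HB') as [S [HS _]].
  now rewrite (sumsq_spec _ _ HS).
Qed.

Lemma L2_sumsq_nonneg (u w : L2) : 0 <= sumsq (fun n => proj1_sig u n - proj1_sig w n).
Proof.
  apply Rle_trans with (sum_f_R0 (fun n => (proj1_sig u n - proj1_sig w n) ^ 2) 0).
  - apply pow2_ge_0.
  - apply sum_incr; [apply L2_diff_sumsq | intros; apply pow2_ge_0].
Qed.

Lemma L2_triangle (u m w : L2) : L2_dist u w <= L2_dist u m + L2_dist m w.
Proof.
  apply sqrt_le_of_weighted_bounds; try apply L2_sumsq_nonneg.
  intros t Ht.
  destruct (weighted_square_sum_bound
              (fun n => proj1_sig u n - proj1_sig m n) (fun n => proj1_sig m n - proj1_sig w n)
              (fun n => proj1_sig u n - proj1_sig w n) _ _ t Ht ltac:(intros; cbv beta; ring)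
              (L2_diff_sumsq u m) (L2_diff_sumsq m w)) as [S [HS HSle]].
  now rewrite (sumsq_spec _ _ HS).
Qed.

Definition L2_scal (c : R) (u : L2) : L2.
Proof.
  exists (fun n => c * proj1_sig u n).
  destruct (proj2_sig u) as [A HA]. exists (c ^ 2 * A).
  revert HA. intros HA%(infinite_sum_scal _ (c ^ 2)). revert HA.
  apply infinite_sum_ext. intros; ring.
Defined.

Lemma L2_scal_dist c u w : 0 <= c -> L2_dist (L2_scal c u) (L2_scal c w) = c * L2_dist u w.
Proof.
  intros Hc. unfold L2_dist. simpl.
  rewrite (sumsq_spec (fun n => c * proj1_sig u n - c * proj1_sig w n)
             (c ^ 2 * sumsq (fun n => proj1_sig u n - proj1_sig w n))).
  - rewrite sqrt_mult by (nra || apply L2_sumsq_nonneg). now rewrite sqrt_pow2.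
  - generalize (infinite_sum_scal _ (c ^ 2) _ (L2_diff_sumsq u w)).
    apply infinite_sum_ext. intros; ring.
Qed.

Lemma Rabs_m1 : Rabs (-1) = 1.
Proof. rewrite Rabs_left by lra. ring. Qed.

Section NormedSpaceFacts.
Variable Z : NormedSpace.
Local Notation add := (ns_add Z).
Local Notation scal := (ns_scal Z).
Local Notation opp := (ns_opp Z).
Local Notation dist := (ns_dist Z).

Lemma ns_add0l x : add (ns_zero Z) x = x.
Proof. rewrite ns_addC. apply ns_add0. Qed.

Lemma ns_scal0 x : scal 0 x = ns_zero Z.
Proof.
  assert (E : scal 0 x = add (scal 0 x) (scal 0 x))
    by (rewrite <- ns_scalDl; f_equal; ring).
  transitivity (add (scal 0 x) (add (scal 0 x) (opp (scal 0 x)))).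
  - now rewrite ns_addN, ns_add0.
  - rewrite ns_addA, <- E. apply ns_addN.
Qed.

Lemma ns_opp_scal x : opp x = scal (-1) x.
Proof.
  assert (E : add (scal (-1) x) x = ns_zero Z).
  { rewrite <- (ns_scal1 Z x) at 2. rewrite <- ns_scalDl.
    replace (-1 + 1) with 0 by ring. apply ns_scal0. }
  now rewrite <- (ns_add0l (opp x)), <- E, <- ns_addA, ns_addN, ns_add0.
Qed.

Lemma ns_dist_scal b x y : dist (scal b x) (scal b y) = Rabs b * dist x y.
Proof.
  unfold ns_dist. rewrite <- ns_norm_scal. f_equal.
  rewrite !ns_opp_scal, ns_scalDr, !ns_scalA. do 2 f_equal. ring.
Qed.

Lemma ns_dist_sym x y : dist x y = dist y x.
Proof.
  unfold ns_dist. replace (add y (opp x)) with (scal (-1) (add x (opp y))).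
  - now rewrite ns_norm_scal, Rabs_m1, Rmult_1_l.
  - rewrite !ns_opp_scal, ns_scalDr, ns_scalA. replace (-1 * -1) with 1 by ring.
    rewrite ns_scal1. apply ns_addC.
Qed.

(** Nonnegativity of the norm is not an axiom; it follows from the triangle
    inequality applied to v + (-v) = 0. *)
Lemma ns_dist_nonneg x y : 0 <= dist x y.
Proof.
  set (v := add x (opp y)).
  pose proof (ns_norm_triangle Z v (opp v)) as H.
  assert (Hzero : ns_norm Z (add v (opp v)) = 0)
    by now rewrite ns_addN, <- (ns_scal0 v), ns_norm_scal, Rabs_R0, Rmult_0_l.
  assert (Hopp : ns_norm Z (opp v) = ns_norm Z v)
    by now rewrite ns_opp_scal, ns_norm_scal, Rabs_m1, Rmult_1_l.
  unfold ns_dist. fold v. lra.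
Qed.

Lemma ns_line_dist x w a c : dist (add x (scal a w)) (add x (scal c w)) = Rabs (a - c) * ns_norm Z w.
Proof.
  unfold ns_dist. rewrite <- ns_norm_scal. f_equal.
  rewrite ns_opp_scal, ns_scalDr, ns_scalA, <- ns_addA, (ns_addA Z (scal a w)),
    (ns_addC Z (scal a w)), <- !ns_addA, ns_addA, <- ns_opp_scal, ns_addN, ns_add0l,
    <- ns_scalDl.
  f_equal. ring.
Qed.

Lemma ns_line_start x w : add x (scal 0 w) = x.
Proof. now rewrite ns_scal0, ns_add0. Qed.

Lemma ns_line_end x y : add x (scal 1 (add y (opp x))) = y.
Proof. now rewrite ns_scal1, ns_addA, (ns_addC Z x y), <- ns_addA, ns_addN, ns_add0. Qed.

End NormedSpaceFacts.

Lemma nat_ceiling (r : R) : 0 <= r -> exists m : nat, r < INR (S m) <= r + 1.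
Proof.
  intros Hr. destruct (archimed r) as [Hup Hup1].
  assert (Hpos : (0 < up r)%Z) by (apply lt_0_IZR; lra).
  exists (Z.to_nat (up r) - 1)%nat.
  replace (S (Z.to_nat (up r) - 1)) with (Z.to_nat (up r)) by lia.
  rewrite INR_IZR_INZ, Z2Nat.id by lia. lra.
Qed.

Section CoarseLipschitz.
Variables (Y : Type) (dY : Y -> Y -> R).
Hypothesis dY_triangle : forall u m w, dY u w <= dY u m + dY m w.

Lemma chain_dist (G : nat -> Y) e m :
  (forall k, (k <= m)%nat -> dY (G k) (G (S k)) <= e) -> dY (G 0%nat) (G (S m)) <= INR (S m) * e.
Proof.
  induction m as [|m IH]; intros Hstep.
  - rewrite Rmult_1_l. apply Hstep. lia.
  - eapply Rle_trans; [apply (dY_triangle _ (G (S m)))|].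
    rewrite S_INR, Rmult_plus_distr_r, Rmult_1_l.
    apply Rplus_le_compat; [apply IH; intros; apply Hstep; lia | apply Hstep; lia].
Qed.

(** Subdivide the segment [x, y]. *)
Lemma coarse_lipschitz (Z : NormedSpace) (F : Z -> Y) e d1 : 0 <= e -> 0 < d1 ->
  (forall x y, ns_dist Z x y < d1 -> dY (F x) (F y) < e) ->
  forall x y, dY (F x) (F y) <= e * (ns_dist Z x y / d1 + 1).
Proof.
  intros He Hd1 HF x y.
  set (D := ns_dist Z x y).
  assert (HD : 0 <= D) by apply ns_dist_nonneg.
  destruct (nat_ceiling (D / d1) ltac:(apply Rmult_le_pos; [lra | left; apply Rinv_0_lt_compat; lra])) as [m [Hm Hm1]].
  set (n := INR (S m)) in *.
  assert (Hn : 0 < n) by apply lt_0_INR, Nat.lt_0_succ.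
  set (w := ns_add Z y (ns_opp Z x)).
  set (G := fun k => F (ns_add Z x (ns_scal Z (INR k / n) w))).
  assert (Hstep : forall k, dY (G k) (G (S k)) <= e).
  { intros k. left. apply HF.
    rewrite ns_line_dist.
    replace (INR k / n - INR (S k) / n) with (- / n) by (rewrite S_INR; field; lra).
    rewrite Rabs_Ropp, Rabs_right by (left; apply Rinv_0_lt_compat, Hn).
    replace (ns_norm Z w) with D by (unfold D, w; apply ns_dist_sym).
    apply (Rmult_lt_reg_l n); [exact Hn|].
    rewrite <- Rmult_assoc, Rinv_r, Rmult_1_l by lra.
    apply (Rmult_lt_reg_r (/ d1)); [apply Rinv_0_lt_compat, Hd1|].
    rewrite Rmult_assoc, Rinv_r, Rmult_1_r by lra. exact Hm. }
  pose proof (chain_dist G e m (fun k _ => Hstep k)) as Hchain.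
  unfold G in Hchain. fold n in Hchain.
  replace (INR 0 / n) with 0 in Hchain by (rewrite INR_0; field; lra).
  replace (n / n) with 1 in Hchain by (field; lra).
  unfold w in Hchain. rewrite ns_line_start, ns_line_end in Hchain.
  eapply Rle_trans; [exact Hchain|].
  rewrite Rmult_comm. apply Rmult_le_compat_l; lra.
Qed.

End CoarseLipschitz.

Section Rescaling.
Variables (Z : NormedSpace) (F : Z -> L2).

Definition rescaled (c tau : R) (x : Z) : L2 := L2_scal (tau / c) (F (ns_scal Z (/ tau) x)).

Lemma rescaled_dist c tau x y : 0 < c -> 0 < tau ->
  L2_dist (rescaled c tau x) (rescaled c tau y)
  = tau / c * L2_dist (F (ns_scal Z (/ tau) x)) (F (ns_scal Z (/ tau) y)).
Proof. intros Hc Htau. apply L2_scal_dist, Rlt_le, Rdiv_lt_0_compat; assumption. Qed.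

Lemma ns_dist_shrink tau x y : 0 < tau ->
  ns_dist Z (ns_scal Z (/ tau) x) (ns_scal Z (/ tau) y) = ns_dist Z x y / tau.
Proof.
  intros Htau. rewrite ns_dist_scal, Rabs_right by (left; apply Rinv_0_lt_compat, Htau).
  unfold Rdiv. ring.
Qed.

Lemma rescaled_thresholding d2 tau : 0 < d2 -> 0 < tau ->
  (forall x y, L2_dist (F x) (F y) < d2 -> ns_dist Z x y < 1) ->
  thresholding Z (ns_dist Z) tau (rescaled d2 tau).
Proof.
  intros Hd2 Htau Hexpand x y Hxy.
  rewrite rescaled_dist by assumption.
  destruct (Rlt_le_dec (L2_dist (F (ns_scal Z (/ tau) x)) (F (ns_scal Z (/ tau) y))) d2)
    as [Hclose | Hfar].
  - exfalso. apply Hexpand in Hclose. rewrite ns_dist_shrink in Hclose by exact Htau.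
    apply (Rmult_lt_compat_r tau) in Hclose; [|exact Htau].
    unfold Rdiv in Hclose. rewrite Rmult_assoc, Rinv_l, Rmult_1_r, Rmult_1_l in Hclose by lra.
    lra.
  - apply Rle_ge. replace tau with (tau / d2 * d2) at 1 by (field; lra).
    apply Rmult_le_compat_l; [apply Rlt_le, Rdiv_lt_0_compat|]; lra.
Qed.

Lemma rescaled_ratio_bound e d1 d2 tau eps : 0 <= e -> 0 < d1 -> 0 < d2 -> 0 < tau ->
  0 < eps -> eps <= d1 ->
  (forall x y, L2_dist (F x) (F y) <= e * (ns_dist Z x y / d1 + 1)) ->
  forall x y, ns_dist Z x y >= eps * tau ->
    eps * L2_dist (rescaled d2 tau x) (rescaled d2 tau y) / ns_dist Z x y <= 2 * e / d2.
Proof.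
  intros He Hd1 Hd2 Htau Heps Hepsd1 Hcoarse x y Hxy.
  rewrite rescaled_dist by assumption.
  pose proof (Hcoarse (ns_scal Z (/ tau) x) (ns_scal Z (/ tau) y)) as HL.
  rewrite ns_dist_shrink in HL by exact Htau.
  set (D := ns_dist Z x y) in *.
  set (L := L2_dist (F (ns_scal Z (/ tau) x)) (F (ns_scal Z (/ tau) y))) in *.
  assert (HD : 0 < D) by nra.
  assert (Hsmall : eps * D / d1 <= D).
  { apply (Rmult_le_reg_r d1); [exact Hd1|].
    replace (eps * D / d1 * d1) with (eps * D) by (field; lra). nra. }
  (* eps tau L <= e (eps D / d1 + eps tau) <= 2 e D *)
  assert (Hkey : eps * tau * L <= 2 * e * D).
  { apply Rle_trans with (eps * tau * (e * (D / tau / d1 + 1))).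
    - apply Rmult_le_compat_l; [nra | exact HL].
    - replace (eps * tau * (e * (D / tau / d1 + 1))) with (e * (eps * D / d1 + eps * tau))
        by (field; lra).
      nra. }
  apply (Rmult_le_reg_r (D * d2)); [nra|].
  replace (eps * (tau / d2 * L) / D * (D * d2)) with (eps * tau * L) by (field; lra).
  replace (2 * e / d2 * (D * d2)) with (2 * e * D) by (field; lra).
  exact Hkey.
Qed.

End Rescaling.

Theorem lemma5p7 (Z : NormedSpace) :
  complete Z ->
  uniformly_embeds_into_L2 (ns_car Z) (ns_dist Z) ->
  Lambda_nontrivial (ns_car Z) (ns_dist Z).
Proof.
  intros _ [F [_ [Hcont Hexpand]]] delta eps0 Hdelta Heps0.
  destruct (Hexpand 1 Rlt_0_1) as [d2 [Hd2 Hd2exp]].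
  set (e := delta * d2 / 2).
  assert (He : 0 < e) by (unfold e; nra).
  destruct (Hcont e He) as [d1 [Hd1 Hd1cont]].
  pose proof (coarse_lipschitz L2 L2_dist L2_triangle Z F e d1 (Rlt_le _ _ He) Hd1 Hd1cont)
    as Hcoarse.
  exists (Rmin (eps0 / 2) d1).
  pose proof (Rmin_l (eps0 / 2) d1). pose proof (Rmin_r (eps0 / 2) d1).
  assert (Heps : 0 < Rmin (eps0 / 2) d1) by (apply Rmin_glb_lt; lra).
  split; [exact Heps|]. split; [lra|].
  intros tau Htau eta Heta.
  exists (rescaled Z F d2 tau). split.
  - exact (rescaled_thresholding Z F d2 tau Hd2 Htau Hd2exp).
  - intros x y Hxy.
    eapply Rle_trans;
      [exact (rescaled_ratio_bound Z F e d1 d2 tau _ (Rlt_le _ _ He) Hd1 Hd2 Htau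
                Heps ltac:(assumption) Hcoarse x y Hxy)|].
    replace (2 * e / d2) with delta by (unfold e; field; lra). lra.
Qed.
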